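(* Let $\mathcal E$ be a nest on a complex Banach space $X$ and let $\Phi$ be a support function on $\mathcal E$ with $\Phi(\{0\})=\{0\}$. Then: (i) $\mathcal M(\Phi)=\mathcal M(\Phi_-)$; (ii) $\Phi_{\mathcal M(\Phi)}=\Phi_-$; (iii) if $\Phi$ is admissible, then $\Phi_{\mathcal M(\Phi)}=\Phi$.
   Context: A nest $\mathcal E$ on $X$ is a family of closed linear subspaces of $X$, totally ordered by inclusion, containing $\{0\}$ and $X$, closed under arbitrary meets $\wedge$ (intersections) and joins $\vee$ (norm-closed linear spans of unions). For $E\in\mathcal E$, $E_-=\vee\{F\in\mathcal E: F\subsetneq E\}$. A support function on $\mathcal E$ is an inclusion-preserving map $\Phi:\mathcal E\to\mathcal E$; it is admissible if for every $N\in\mathcal E\setminus\{\{0\}\}$, $\vee_{E\in\mathcal E,E\subsetneq N}\Phi(E)=\Phi(N_-)$. For a support function $\Phi$, $\Phi_-$ is defined by $\Phi_-(\{0\})=\Phi(\{0\})$ and, for $E\neq\{0\}$, $\Phi_-(E)=\Phi(E)$ if $E_-\subsetneq E$ and $\Phi_-(E)=\vee_{F\in\mathcal E,F\subsetneq E}\Phi(F)$ if $E_-=E$ (it is the greatest admissible support function below $\Phi$ in the pointwise inclusion order). $\mathcal M(\Phi)=\{T\in\mathcal B(X): TE\subseteq\Phi(E)\ \forall E\in\mathcal E\}$; it is a bimodule over the nest algebra $\mathcal T(\mathcal E)=\{T\in\mathcal B(X): TE\subseteq E\ \forall E\in\mathcal E\}$. For a $\mathcal T(\mathcal E)$-bimodule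 $\mathcal J$ (a linear subspace of $\mathcal B(X)$ with $\mathcal T(\mathcal E)\mathcal J,\mathcal J\mathcal T(\mathcal E)\subseteq\mathcal J$), $\Phi_{\mathcal J}(E)=[\mathcal JE]$, the norm-closed linear span of $\{Tx:T\in\mathcal J,x\in E\}$. *)

(* Complex scalars are R[i] for R : realType
   (the complex numbers of mathcomp-real-closed); a complex Banach space is
   a completeNormedModType over R[i]. *)
From mathcomp Require Import all_boot all_order all_algebra.
From mathcomp Require Import complex.
From mathcomp Require Import all_classical all_reals all_analysis.
Import numFieldNormedType.Exports.

Set Implicit Arguments.
Unset Strict Implicit.
Unset Printing Implicit Defensive.

Local Open Scope classical_set_scope.
Local Open Scope ring_scope.

Section NestDefs.
Context {R : realType} {X : completeNormedModType (R[i])}.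

Definition subspace (V : set X) : Prop :=
  V 0 /\ (forall x y, V x -> V y -> V (x + y)) /\
  (forall (a : R[i]) x, V x -> V (a *: x)).

Definition closed_subspace (V : set X) : Prop := subspace V /\ closed V.

Definition cspan (S : set X) : set X :=
  \bigcap_(V in [set V | closed_subspace V /\ S `<=` V]) V.

Definition is_nest (N : set (set X)) : Prop :=
  (forall E, N E -> closed_subspace E) /\
  (forall E F, N E -> N F -> E `<=` F \/ F `<=` E) /\
  N [set 0] /\ N setT /\
  (forall F : set (set X), F `<=` N -> N (\bigcap_(E in F) E)) /\
  (forall F : set (set X), F `<=` N -> N (cspan (\bigcup_(E in F) E))).

Definition strict_below (N : set (set X)) (E : set X) : set (set X) :=
  [set F | N F /\ F `<=` E /\ F <> E].

Definition nest_minus (N : set (set X)) (E : set X) : set X :=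
  cspan (\bigcup_(F in strict_below N E) F).

Definition support_function (N : set (set X)) (Phi : set X -> set X) : Prop :=
  (forall E, N E -> N (Phi E)) /\
  (forall E F, N E -> N F -> E `<=` F -> Phi E `<=` Phi F).

Definition admissible (N : set (set X)) (Phi : set X -> set X) : Prop :=
  forall Nn, N Nn -> Nn <> [set 0] ->
    cspan (\bigcup_(E in strict_below N Nn) Phi E) = Phi (nest_minus N Nn).

Definition phi_minus (N : set (set X)) (Phi : set X -> set X) (E : set X)
  : set X :=
  if `[< E = [set 0] >] then Phi E
  else if `[< nest_minus N E <> E >] then Phi E
  else cspan (\bigcup_(F in strict_below N E) Phi F).

(* bounded (= continuous) linear operators on X *)
Definition bounded_op (T : X -> X) : Prop :=
  (forall (a : R[i]) x y, T (a *: x + y) = a *: T x + T y) /\ continuous T.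

Definition Mphi (N : set (set X)) (Phi : set X -> set X) : set (X -> X) :=
  [set T | bounded_op T /\ forall E, N E -> T @` E `<=` Phi E].

Definition Phi_of (J : set (X -> X)) (E : set X) : set X :=
  cspan [set y | exists2 T, J T & exists2 x, E x & y = T x].

End NestDefs.

From mathcomp Require Import all_boot all_order all_algebra.
From mathcomp Require Import complex.
From mathcomp Require Import all_classical all_reals all_analysis.
From mathcomp Require Import ring lra.
Import numFieldNormedType.Exports.
Import Order.TTheory GRing.Theory Num.Theory.
Local Open Scope classical_set_scope.
Local Open Scope ring_scope.

(* The inclusion M(Phi) ⊆ M(Phi_-) holds because a bounded operator maps the
   closed span of the F ⊊ E into the closed span of their images;
   hence when E = E_- we get T E ⊆ ∨_{F ⊊ E} Phi(F) = Phi_-(E).  The reverse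
   inclusion follows from Phi_- ≤ Phi, giving (i), and also the inclusion
   Phi_{M(Phi)}(E) ⊆ Phi_-(E) in (ii).
   For the other inclusion in (ii) we need many operators in M(Phi): if F ⊊ E
   is a closed subspace, x ∈ E \ F and y lies in Phi(G) for every G ∈ N not
   contained in F, then a rank-one operator z ↦ f(z) y with f ∈ X*, f|F = 0,
   f(x) = 1 belongs to M(Phi) and sends x to y.  Finally (iii)
   is (ii) together with the observation that admissibility makes Phi_- = Phi. *)

Section RealHahnBanach.
Local Set Implicit Arguments.
Local Unset Strict Implicit.
Local Open Scope complex_scope.
Context {R : realType} {V : normedModType R[i]}.

Definition rnorm (x : V) : R := complex.Re `|x|.
Definition rscale (t : R) (x : V) : V := t%:C *: x.

Lemma rnormE (x : V) : `|x| = (rnorm x)%:C.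
Proof. by rewrite /rnorm RRe_real // normr_real. Qed.

Lemma normC_real (r : R) : `|r%:C| = `|r|%:C.
Proof. by rewrite normc_def /= expr0n /= addr0 sqrtr_sqr. Qed.

Lemma rnorm_ge0 x : 0 <= rnorm x.
Proof. by have := normr_ge0 x; rewrite rnormE ler0c. Qed.

Lemma rnormD x y : rnorm (x + y) <= rnorm x + rnorm y.
Proof. by rewrite -lecR rmorphD /= -!rnormE ler_normD. Qed.

Lemma rnormZ t x : rnorm (rscale t x) = `|t| * rnorm x.
Proof. by apply: complexI; rewrite rmorphM /= -!rnormE -normC_real normrZ. Qed.

Lemma rnormN x : rnorm (- x) = rnorm x.
Proof. by rewrite /rnorm normrN. Qed.

Lemma rnorm0 : rnorm 0 = 0.
Proof. by rewrite /rnorm normr0. Qed.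

Lemma rscale0 x : rscale 0 x = 0. Proof. by rewrite /rscale rmorph0 scale0r. Qed.
Lemma rscale1 x : rscale 1 x = x. Proof. by rewrite /rscale rmorph1 scale1r. Qed.
Lemma rscaleA s t x : rscale s (rscale t x) = rscale (s * t) x.
Proof. by rewrite /rscale scalerA rmorphM. Qed.
Lemma rscaleDl s t x : rscale (s + t) x = rscale s x + rscale t x.
Proof. by rewrite /rscale rmorphD scalerDl. Qed.
Lemma rscaleDr t x y : rscale t (x + y) = rscale t x + rscale t y.
Proof. by rewrite /rscale scalerDr. Qed.
Lemma rscaleNl t x : rscale (- t) x = - rscale t x.
Proof. by rewrite /rscale rmorphN scaleNr. Qed.
Lemma rscaleNr t x : rscale t (- x) = - rscale t x.
Proof. by rewrite /rscale scalerN. Qed.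

(* G is the graph of a real-linear functional on a real subspace of V which
   is dominated by the norm. *)
Definition dominated_graph (G : set (V * R)) : Prop :=
  [/\ G (0, 0), (forall y a z b, G (y, a) -> G (z, b) -> G (y + z, a + b)),
   (forall t y a, G (y, a) -> G (rscale t y, t * a)) &
   (forall y a, G (y, a) -> a <= rnorm y)].

(* The classical choice of the value c at a new vector x0 in the one-step
   extension: c lies between sup (a - |y - x0|) and inf (|z + x0| - b). *)
Lemma extension_value H x0 : dominated_graph H ->
  exists c, (forall z b, H (z, b) -> b + c <= rnorm (z + x0)) /\
            (forall y a, H (y, a) -> a - c <= rnorm (y - x0)).
Proof.
move=> [H0 HD _ HN].
have gap y a z b : H (y, a) -> H (z, b) ->
    a - rnorm (y - x0) <= rnorm (z + x0) - b.
  move=> Hya Hzb; have := HN _ _ (HD _ _ _ _ Hya Hzb).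
  have := rnormD (y - x0) (z + x0).
  have -> : y - x0 + (z + x0) = y + z by rewrite addrACA addNr addr0.
  lra.
pose S := [set r | exists y a, H (y, a) /\ r = a - rnorm (y - x0)].
have hS : has_sup S.
  split; first by exists (0 - rnorm (0 - x0)); exists 0, 0.
  by exists (rnorm (0 + x0) - 0) => r [y [a [Hya ->]]]; apply: gap Hya _.
exists (sup S); split.
- move=> z b Hzb; suff : sup S <= rnorm (z + x0) - b by lra.
  apply: ge_sup; first by case: hS.
  by move=> r [y [a [Hya ->]]]; exact: gap.
- move=> y a Hya; suff : a - rnorm (y - x0) <= sup S by lra.
  by apply: sup_upper_bound => //; exists y, a.
Qed.

Lemma dominated_graph_extend H x0 : dominated_graph H ->
  exists H', [/\ dominated_graph H', H `<=` H' & exists c, H' (x0, c)].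
Proof.
move=> gH; have [c [U L]] := extension_value x0 gH; case: gH => [H0 HD HZ HN].
exists [set p | exists y a t, H (y, a) /\ p = (y + rscale t x0, a + t * c)].
split; last first.
- by exists c, 0, 0, 1; split => //; rewrite rscale1 add0r mul1r add0r.
- move=> [y a] Hya; exists y, a, 0; split => //.
  by rewrite rscale0 addr0 mul0r addr0.
split.
- by exists 0, 0, 0; split => //; rewrite rscale0 addr0 mul0r addr0.
- move=> _ _ _ _ [y1 [a1 [t1 [H1 [-> ->]]]]] [y2 [a2 [t2 [H2 [-> ->]]]]].
  exists (y1 + y2), (a1 + a2), (t1 + t2); split; first exact: HD.
  by congr pair; [rewrite rscaleDl addrACA | ring].
- move=> s _ _ [y [a [t [Hya [-> ->]]]]].
  exists (rscale s y), (s * a), (s * t); split; first exact: HZ.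
  by congr pair; [rewrite rscaleDr rscaleA | ring].
- move=> _ _ [y [a [t [Hya [-> ->]]]]].
  have [tlt|tgt|->] := ltgtP t 0; last first.
  + by rewrite rscale0 addr0 mul0r addr0; exact: HN.
  + (* y + t x0 = t (t^-1 y + x0), and the bound U applies to (t^-1 y, t^-1 a) *)
    have := U _ _ (HZ t^-1 _ _ Hya).
    have -> : y + rscale t x0 = rscale t (rscale t^-1 y + x0).
      by rewrite rscaleDr rscaleA mulfV ?gt_eqF // rscale1.
    rewrite rnormZ gtr0_norm // => h.
    have := ler_wpM2l (ltW tgt) h.
    rewrite mulrDr mulrA mulfV ?gt_eqF // mul1r; lra.
  + (* symmetric case with u = -t > 0, using the bound L *)
    pose u := - t; have u0 : 0 < u by rewrite /u oppr_gt0.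
    have := L _ _ (HZ u^-1 _ _ Hya).
    have -> : y + rscale t x0 = rscale u (rscale u^-1 y - x0).
      by rewrite rscaleDr rscaleA mulfV ?gt_eqF // rscale1 rscaleNr -rscaleNl opprK.
    rewrite rnormZ gtr0_norm // => h.
    have := ler_wpM2l (ltW u0) h.
    rewrite mulrBr mulrA mulfV ?gt_eqF // mul1r /u; lra.
Qed.

Lemma dominated_graph_chain (G0 : set (V * R)) (F : set (set (V * R))) :
  dominated_graph G0 -> (forall A, F A -> dominated_graph (G0 `|` A)) ->
  total_on F subset ->
  dominated_graph (G0 `|` \bigcup_(A in F) A).
Proof.
move=> gG0 FP Ftot; pose U := G0 `|` \bigcup_(A in F) A.
have inU A : F A -> G0 `|` A `<=` U.
  by move=> FA r [G0r|Ar]; [left|right; exists A].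
have two p q : U p -> U q -> exists K, [/\ dominated_graph K, K `<=` U, K p & K q].
  move=> [G0p|[A1 FA1 A1p]] [G0q|[A2 FA2 A2q]].
  - by exists G0; split => // r G0r; left.
  - by exists (G0 `|` A2); split; [exact: FP|exact: inU|left|right].
  - by exists (G0 `|` A1); split; [exact: FP|exact: inU|right|left].
  - have [A12|A21] := Ftot _ _ FA1 FA2.
    + by exists (G0 `|` A2); split; [exact: FP|exact: inU|right; apply: A12|right].
    + by exists (G0 `|` A1); split; [exact: FP|exact: inU|right|right; apply: A21].
split.
- by left; case: gG0.
- move=> y a z b Hp Hq; have [K [[_ KD _ _] sK Kp Kq]] := two _ _ Hp Hq.
  exact/sK/KD.
- move=> t y a Hp; have [K [[_ _ KZ _] sK Kp _]] := two _ _ Hp Hp.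
  exact/sK/KZ.
- move=> y a Hp; have [K [[_ _ _ KN] sK Kp _]] := two _ _ Hp Hp.
  exact: KN.
Qed.

Lemma dominated_graph_total G0 : dominated_graph G0 ->
  exists H, [/\ dominated_graph H, G0 `<=` H & forall z, exists a, H (z, a)].
Proof.
move=> gG0.
have [|A [gA Amax]] := @Zorn_bigcup _ (fun A => dominated_graph (G0 `|` A)).
  by move=> F FP Ftot; apply: dominated_graph_chain.
exists (G0 `|` A); split=> [//|p G0p|z]; first by left.
have [H' [gH' sH' [c Hc]]] := dominated_graph_extend z gA.
(* by maximality of A, the extension H' adds nothing new *)
suff sH'A : H' `<=` A by exists c; right; apply: sH'A.
apply: contrapT => nsub; apply: (Amax H').
  by split => // p Ap; apply: sH'; right.
suff -> : G0 `|` H' = H' by [].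
by apply/seteqP; split => p; [case=> // G0p; apply: sH'; left | right].
Qed.

Lemma real_hahn_banach G0 : dominated_graph G0 ->
  exists g : V -> R, [/\ forall y a, G0 (y, a) -> g y = a,
    forall u v, g (u + v) = g u + g v,
    forall t u, g (rscale t u) = t * g u & forall u, g u <= rnorm u].
Proof.
move=> /dominated_graph_total [H [[H0 HD HZ HN] sG0 tot]].
have [g Hg] := choice tot.
have uniq y a b : H (y, a) -> H (y, b) -> a = b.
  move=> Ha Hb.
  have h1 := HN _ _ (HD _ _ _ _ Ha (HZ (-1) _ _ Hb)).
  have h2 := HN _ _ (HD _ _ _ _ Hb (HZ (-1) _ _ Ha)).
  move: h1 h2; rewrite rscaleNl rscale1 subrr rnorm0; lra.
exists g; split.
- by move=> y a /sG0 Ha; apply: uniq (Hg y) Ha.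
- by move=> u v; apply: uniq (Hg _) (HD _ _ _ _ (Hg u) (Hg v)).
- by move=> t u; apply: uniq (Hg _) (HZ t _ _ (Hg u)).
- by move=> u; exact: HN (Hg u).
Qed.

Lemma normi : `|'i%C : R[i]| = 1.
Proof. by rewrite normc_def /= expr0n expr1n add0r sqrtr1. Qed.

Definition complexify (g : V -> R) (u : V) : R[i] :=
  (g u)%:C - 'i%C * (g ('i%C *: u))%:C.

Section Complexify.
Variable g : V -> R.
Hypothesis gD : forall u v, g (u + v) = g u + g v.
Hypothesis gZ : forall t u, g (rscale t u) = t * g u.

Let gN u : g (- u) = - g u.
Proof. by rewrite -[- u]rscale1 rscaleNr -rscaleNl gZ mulN1r. Qed.

Let ii : 'i%C * 'i%C = -1 :> R[i].
Proof. by rewrite -expr2 sqr_i. Qed.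

Lemma complexify_linear a u v :
  complexify g (a *: u + v) = a * complexify g u + complexify g v.
Proof.
have cD x y : complexify g (x + y) = complexify g x + complexify g y.
  by rewrite /complexify scalerDr !gD !rmorphD /=; ring.
have cR (t : R) x : complexify g (t%:C *: x) = t%:C * complexify g x.
  rewrite /complexify.
  have -> : 'i%C *: (t%:C *: x) = t%:C *: ('i%C *: x) by rewrite !scalerA mulrC.
  have := gZ t x; rewrite /rscale => ->.
  have := gZ t ('i%C *: x); rewrite /rscale => ->.
  by rewrite !rmorphM /=; ring.
have ci x : complexify g ('i%C *: x) = 'i%C * complexify g x.
  rewrite /complexify scalerA ii scaleN1r gN rmorphN.
  by rewrite mulrBr mulrA ii; ring.
rewrite cD; congr (_ + _).
have -> : a *: u = (complex.Re a)%:C *: u + 'i%C *: ((complex.Im a)%:C *: u).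
  by rewrite scalerA -scalerDl -complexE.
by rewrite cD cR ci cR mulrA -mulrDl -complexE.
Qed.

Lemma complexify_Re u : complex.Re (complexify g u) = g u.
Proof. by rewrite /complexify /= mul0r mul1r !subr0. Qed.

Lemma complexify_bounded : (forall u, g u <= rnorm u) ->
  forall z, `|complexify g z| <= 2%:R * `|z|.
Proof.
move=> gle.
have gabs u : `|g u| <= rnorm u.
  rewrite ler_norml gle andbT; have := gle (- u); rewrite gN rnormN; lra.
have rnormi z : rnorm ('i%C *: z) = rnorm z by rewrite /rnorm normrZ normi mul1r.
move=> z; rewrite /complexify; apply: le_trans (ler_normB _ _) _.
rewrite normrM !normC_real rnormE normi mul1r -rmorphD /=.
rewrite -(rmorph_nat (real_complex R)) -rmorphM lecR.
have := gabs z; have := gabs ('i%C *: z); rewrite rnormi; lra.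
Qed.

End Complexify.

Lemma closed_dist_pos (F : set V) x : closed F -> ~ F x ->
  exists2 d : R, 0 < d & forall u, F u -> d <= rnorm (x - u).
Proof.
move=> cF nFx.
have [B nB FB0] : exists2 B, nbhs x B & forall u, F u -> ~ B u.
  apply: contrapT => h; apply: nFx; apply: cF => B nB.
  apply: contrapT => h2; apply: h; exists B => // u Fu Bu; by apply: h2; exists u.
move: nB => /nbhs_ballP [e /= e0 eB]; rewrite -ball_normE in eB.
have ee : e = (complex.Re e)%:C.
  by move: e0; case: e {eB} => a b; rewrite ltcE /= => /andP[/eqP -> _].
exists (complex.Re e); first by rewrite -ltcR -ee.
move=> u Fu; rewrite leNgt; apply/negP => h; apply: (FB0 u Fu); apply: eB.
by rewrite /= rnormE ee ltcR.
Qed.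

End RealHahnBanach.

Section RankOneOperators.
Local Set Implicit Arguments.
Local Unset Strict Implicit.
Local Open Scope complex_scope.
Context {R : realType} {X : completeNormedModType (R[i])}.

(* Real separation: a norm-dominated real functional vanishing on the closed
   subspace F and positive at x; it extends t x + w |-> t d (w in F), where d
   is the distance from x to F. *)
Lemma real_separating_functional (F : set X) x : closed_subspace F -> ~ F x ->
  exists g : X -> R, [/\ forall u v, g (u + v) = g u + g v,
    forall t u, g (rscale t u) = t * g u, forall u, g u <= rnorm u,
    forall z, F z -> g z = 0 & 0 < g x].
Proof.
move=> [[F0 [FD FZ]] cF] nFx.
have [d d0 hd] := closed_dist_pos cF nFx.
pose G0 := [set p | exists w t, F w /\ p = (w + rscale t x, t * d)].
have gG0 : dominated_graph G0.
  split.
  - by exists 0, 0; split => //; rewrite rscale0 addr0 mul0r.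
  - move=> _ _ _ _ [w1 [t1 [F1 [-> ->]]]] [w2 [t2 [F2 [-> ->]]]].
    exists (w1 + w2), (t1 + t2); split; first exact: FD.
    by congr pair; [rewrite rscaleDl addrACA | ring].
  - move=> s _ _ [w [t [Fw [-> ->]]]]; exists (rscale s w), (s * t).
    by split; [exact: FZ | congr pair; [rewrite rscaleDr rscaleA | ring]].
  - move=> _ _ [w [t [Fw [-> ->]]]].
    have [tle|tgt] := lerP t 0; first by have := rnorm_ge0 (w + rscale t x); nra.
    (* |w + t x| = t |x - (-t^-1 w)| >= t d *)
    have := hd (rscale (- t^-1) w) (FZ _ _ Fw).
    have -> : x - rscale (- t^-1) w = rscale t^-1 w + x by rewrite rscaleNl opprK addrC.
    have -> : w + rscale t x = rscale t (rscale t^-1 w + x).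
      by rewrite rscaleDr rscaleA mulfV ?gt_eqF // rscale1.
    rewrite rnormZ gtr0_norm // => h.
    by have := ler_wpM2l (ltW tgt) h.
have [g [g0 gD gZ gle]] := real_hahn_banach gG0.
exists g; split => //.
- by move=> w Fw; apply: g0; exists w, 0; rewrite rscale0 addr0 mul0r.
- by rewrite (g0 x d) //; exists 0, 1; rewrite add0r rscale1 mul1r.
Qed.

Lemma separating_functional (F : set X) x : closed_subspace F -> ~ F x ->
  exists f : X -> R[i], [/\ forall a u v, f (a *: u + v) = a * f u + f v,
    forall z, F z -> f z = 0, f x = 1 &
    exists2 C, 0 <= C & forall z, `|f z| <= C * `|z|].
Proof.
move=> cF nFx; have [g [gD gZ gle gF gx]] := real_separating_functional cF nFx.
have [[_ [_ FZ]] _] := cF.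
pose f0 := complexify g.
have f0x : f0 x != 0.
  apply/eqP => /(congr1 (@complex.Re R)); rewrite complexify_Re /= => g0.
  by move: gx; rewrite g0 ltxx.
exists (fun u => f0 u / f0 x); split.
- by move=> a u v; rewrite /f0 complexify_linear // mulrDl mulrA.
- move=> z Fz; rewrite /f0 /complexify (gF _ Fz) (gF _ (FZ _ _ Fz)).
  by rewrite mulr0 subr0 mul0r.
- by rewrite mulfV.
- exists (2%:R / `|f0 x|); first by rewrite divr_ge0 // ler0n.
  move=> z; rewrite normrM normfV mulrAC.
  by apply: ler_wpM2r; [rewrite invr_ge0 | exact: complexify_bounded].
Qed.

Lemma rank_one_operator (F : set X) x y : closed_subspace F -> ~ F x ->
  exists T : X -> X, [/\ bounded_op T, forall z, F z -> T z = 0, T x = y &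
    forall z, exists a : R[i], T z = a *: y].
Proof.
move=> cF nFx; have [f [flin fF fx [C C0 fb]]] := separating_functional cF nFx.
have fB z t : f z - f t = f (z - t).
  rewrite [z - t]addrC [f z - f t]addrC.
  by have := flin (-1) t z; rewrite scaleN1r mulN1r => ->.
exists (fun z => f z *: y); split.
- split; first by move=> a u v; rewrite flin scalerDl scalerA.
  (* Lipschitz continuity with constant K = C |y| + 1 > 0 *)
  move=> z; apply/cvgrPdist_lt => e e0.
  pose K := C * `|y| + 1.
  have K0 : 0 < K by rewrite /K ltr_wpDl ?mulr_ge0.
  have := @near_ball _ X z _ (divr_gt0 e0 K0); rewrite -ball_normE /=.
  apply: filterS => t ht.
  rewrite -scalerBl fB normrZ.
  apply: (le_lt_trans (ler_wpM2r (normr_ge0 y) (fb (z - t)))).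
  apply: (@le_lt_trans _ _ (K * `|z - t|)).
    by rewrite /K mulrAC mulrDl mul1r lerDl.
  by rewrite -ltr_pdivlMl // mulrC.
- by move=> w Fw; rewrite fF // scale0r.
- by rewrite fx scale1r.
- by move=> w; exists (f w).
Qed.

Lemma cspan_closed_subspace (S : set X) : closed_subspace (cspan S).
Proof.
split; last by apply: closed_bigI => V [[_ cV] _].
split; first by move=> V [[[V0 _] _] _].
split.
  move=> x y hx hy V DV; have [[[_ [VD _]] _] _] := DV.
  by apply: VD; [exact: hx|exact: hy].
by move=> a x hx V DV; have [[[_ [_ VZ]] _] _] := DV; apply: VZ; exact: hx.
Qed.

Lemma sub_cspan (S : set X) : S `<=` cspan S.
Proof. by move=> x Sx V [_ SV]; apply: SV. Qed.

Lemma cspan_min (S V : set X) : closed_subspace V -> S `<=` V -> cspan S `<=` V.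
Proof. by move=> cV SV x; apply; split. Qed.

Lemma bounded_op0 (T : X -> X) : bounded_op T -> T 0 = 0.
Proof.
move=> [lin _]; have := lin 1 0 0; rewrite !scale1r !addr0 => h.
by apply: (addrI (T 0)); rewrite addr0 -h.
Qed.

(* A bounded operator maps the closed span of S into the closed span of T S:
   the preimage of the latter is a closed subspace containing S. *)
Lemma bounded_op_cspan (T : X -> X) (S : set X) :
  bounded_op T -> T @` cspan S `<=` cspan (T @` S).
Proof.
move=> bT; have T0 := bounded_op0 bT; case: bT => lin cT.
have TD x y : T (x + y) = T x + T y.
  by rewrite -[x in T (x + _)]scale1r lin scale1r.
have TZ a x : T (a *: x) = a *: T x.
  by rewrite -[a *: x]addr0 lin T0 addr0.
suff sub : cspan S `<=` T @^-1` cspan (T @` S).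
  by move=> _ [x hx <-]; apply: sub.
apply: cspan_min; last by move=> x Sx; apply: sub_cspan; exists x.
have [[C0 [CD CZ]] cC] := cspan_closed_subspace (T @` S).
split; first split.
- by rewrite /preimage /= T0.
- split.
    by move=> x y hx hy; rewrite /preimage /= TD; exact: CD.
  by move=> a x hx; rewrite /preimage /= TZ; exact: CZ.
- by apply: preimage_closed => // x _; exact: cT.
Qed.

End RankOneOperators.

Section NestBimodule.
Local Set Implicit Arguments.
Local Unset Strict Implicit.
Context {R : realType} {X : completeNormedModType (R[i])}.
Variables (N : set (set X)) (Phi : set X -> set X).
Hypothesis nN : is_nest N.
Hypothesis sPhi : support_function N Phi.

Let Ncs : forall E, N E -> closed_subspace E := nN.1.
Let PhiN : forall E, N E -> N (Phi E) := sPhi.1.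
Let Phimono : forall E F, N E -> N F -> E `<=` F -> Phi E `<=` Phi F := sPhi.2.

Lemma phi_minus_cases E :
  [\/ E = [set 0] /\ phi_minus N Phi E = Phi E,
      [/\ E <> [set 0], nest_minus N E <> E & phi_minus N Phi E = Phi E] |
      [/\ E <> [set 0], nest_minus N E = E &
          phi_minus N Phi E = cspan (\bigcup_(F in strict_below N E) Phi F)]].
Proof.
rewrite /phi_minus.
have [E0|E0] := pselect (E = [set 0]); first by rewrite asboolT //; constructor 1.
rewrite asboolF //; have [Em|Em] := pselect (nest_minus N E <> E).
  by rewrite asboolT //; constructor 2.
by rewrite asboolF //; constructor 3; split => //; apply: contrapT.
Qed.

Lemma phi_minus_sub E : N E -> phi_minus N Phi E `<=` Phi E.
Proof.
move=> NE; case: (phi_minus_cases E) => [[_ ->]|[_ _ ->]|[_ _ ->]] //.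
apply: cspan_min; first exact: Ncs (PhiN NE).
by move=> z [F [NF [FE _]] Fz]; apply: (Phimono NF NE FE).
Qed.

Lemma phi_minus_closed E : N E -> closed_subspace (phi_minus N Phi E).
Proof.
move=> NE; case: (phi_minus_cases E) => [[_ ->]|[_ _ ->]|[_ _ ->]];
  by [exact: Ncs (PhiN NE) | exact: cspan_closed_subspace].
Qed.

(* Part (i).  When E = E_-, a bounded T in M(Phi) maps E = [∨_{F ⊊ E} F]
   into [∨_{F ⊊ E} T F] ⊆ [∨_{F ⊊ E} Phi F] = Phi_-(E). *)
Lemma Mphi_phi_minus : Mphi N Phi = Mphi N (phi_minus N Phi).
Proof.
apply/seteqP; split => T [bT hT]; split => // E NE; last first.
  by move=> _ [x Ex <-]; apply: phi_minus_sub => //; apply: hT => //; exists x.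
case: (phi_minus_cases E) => [[_ ->]|[_ _ ->]|[_ Em ->]]; try exact: hT.
move=> _ [x Ex <-]; rewrite -Em in Ex.
have := bounded_op_cspan bT (ex_intro2 _ _ x Ex erefl).
apply: cspan_min; first exact: cspan_closed_subspace.
move=> _ [z [F sbF Fz] <-]; apply: sub_cspan; exists F => //.
by apply: (hT F sbF.1); exists z.
Qed.

Lemma rank_one_Phi_of E F (Y : set X) : closed_subspace F -> F `<=` E -> F <> E ->
  (forall G, N G -> G `<=` F \/ Y `<=` Phi G) -> Y `<=` Phi_of (Mphi N Phi) E.
Proof.
move=> cF FE FnE hG y Yy.
have [x [Ex nFx]] : exists x, E x /\ ~ F x.
  apply: contrapT => h; apply: FnE; apply/seteqP; split => // x Ex.
  by apply: contrapT => nFx; apply: h; exists x.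
have [T [bT TF Tx Ty]] := rank_one_operator y cF nFx.
apply: sub_cspan; exists T; last by exists x; rewrite ?Tx.
split => // G NG _ [z Gz <-].
have [[P0 [_ PZ]] _] := Ncs (PhiN NG).
case: (hG G NG) => [GF|YG]; first by rewrite TF //; apply: GF.
by have [a ->] := Ty z; apply: PZ; apply: YG.
Qed.

(* Part (ii), first inclusion: by (i), [M(Phi) E] ⊆ Phi_-(E). *)
Lemma Phi_of_Mphi_sub E : N E -> Phi_of (Mphi N Phi) E `<=` phi_minus N Phi E.
Proof.
move=> NE; apply: cspan_min; first exact: phi_minus_closed.
move=> _ [T MT [x Ex ->]].
have [_ h] : Mphi N (phi_minus N Phi) T by rewrite -Mphi_phi_minus.
by apply: (h E NE); exists x.
Qed.

(* Part (ii), second inclusion: if E_- ⊊ E, take F = E_- and Y = Phi(E);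
   if E_- = E, take F ⊊ E and Y = Phi(F) for each such F. *)
Lemma phi_minus_sub_Phi_of E : Phi [set 0] = [set 0] -> N E ->
  phi_minus N Phi E `<=` Phi_of (Mphi N Phi) E.
Proof.
move=> Phi0 NE; have Ntot := nN.2.1.
case: (phi_minus_cases E) => [[E0 ->]|[_ Em ->]|[_ _ ->]].
- rewrite E0 Phi0 => z ->; exact: (cspan_closed_subspace _).1.1.
- apply: (rank_one_Phi_of (F := nest_minus N E)) => //.
  + exact: cspan_closed_subspace.
  + apply: cspan_min; first exact: Ncs.
    by move=> z [F [_ [FE _]] Fz]; apply: FE.
  + move=> G NG; have [GE|EG] := Ntot G E NG NE; last by right; apply: Phimono.
    have [->|GnE] := pselect (G = E); first by right.
    by left => z Gz; apply: sub_cspan; exists G.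
- apply: cspan_min; first exact: cspan_closed_subspace.
  move=> y [F [NF [FE FnE]] Fy].
  apply: (rank_one_Phi_of (F := F) (Y := Phi F)) => //; first exact: Ncs.
  by move=> G NG; have [GF|FG] := Ntot G F NG NF; [left | right; apply: Phimono].
Qed.

Lemma admissible_phi_minus E : admissible N Phi -> N E -> phi_minus N Phi E = Phi E.
Proof.
move=> adm NE; case: (phi_minus_cases E) => [[_ ->]|[_ _ ->]|[E0 Em ->]] //.
by rewrite (adm E NE E0) Em.
Qed.

End NestBimodule.

Theorem mainTheorem5 (R : realType) (X : completeNormedModType (R[i]))
  (N : set (set X)) (Phi : set X -> set X) :
  is_nest N -> support_function N Phi -> Phi [set 0] = [set 0] ->
  [/\ Mphi N Phi = Mphi N (phi_minus N Phi),
      (forall E, N E -> Phi_of (Mphi N Phi) E = phi_minus N Phi E) &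
      (admissible N Phi ->
         forall E, N E -> Phi_of (Mphi N Phi) E = Phi E)].
Proof.
move=> nN sPhi Phi0.
have part2 E : N E -> Phi_of (Mphi N Phi) E = phi_minus N Phi E.
  move=> NE; apply/seteqP; split.
  - exact: Phi_of_Mphi_sub.
  - exact: phi_minus_sub_Phi_of.
split => [|//|adm E NE]; first exact: Mphi_phi_minus.
by rewrite part2 // admissible_phi_minus.
Qed.
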